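(* Let $T$ be the regular rooted tree of valence $p\geq 2$ with the embedded wire diffeology $\mathcal{D}_T$. Then the functional diffeology on $\operatorname{Aut}T$ is the discrete diffeology; that is, every plot $P:U\to\operatorname{Aut}T$ (with $U$ an open subset of some $\mathbb{R}^k$) of the functional diffeology is locally constant.
   Context: Fix a finite alphabet $A$ with $|A|=p\geq 2$. The vertices of $T$ are the finite words over $A$ (the root is the empty word); two vertices are joined by an edge iff they have the form $a_1\dots a_n$ and $a_1\dots a_na_{n+1}$. As a topological space, $T$ is the 1-dimensional CW complex obtained by realizing each edge as a copy of $[0,1]$, with its usual topology. $\operatorname{Aut}T$ is the group of bijections of the vertex set fixing the root and preserving adjacency; each is regarded as a homeomorphism of the geometric realization mapping each edge affinely onto its image edge. A diffeology on a set $X$ is a collection of maps $U\to X$ (''plots''), $U$ ranging over open subsets of all $\mathbb{R}^n$, containing all constant maps, closed under precomposition with smooth maps, and satisfying the sheaf condition. The discrete diffeology on $X$ consists of all locally constant maps $U\to X$. The embedded wire diffeology $\mathcal{D}_T$ is the diffeology on $T$ generated by (i.e. the smallest diffeology containing) all maps $\gamma:\mathbb{R}\to T$ that are injective, continuous, and homeomorphisms onto their images. A map between diffeological spaces is smooth if it sends plots to plots. The functional diffeology on $C^\infty(T,T)$ is the coarsest diffeology such that the evaluation map $C^\infty(T,T)\times T\to T$ is smooth (with the product diffeology, the coarsest making projections smooth); $\operatorname{Aut}T\subseteq C^\infty(T,T)$ carries the subset diffeology. Equivalently, $P:U\to\operatorname{Aut}T$ is a plot iff $(u,x)\mapsto P(u)(x)$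 is smooth $U\times T\to T$. *)

From HB Require Import structures.
From mathcomp Require Import all_boot all_order all_algebra.
From mathcomp Require Import all_classical all_reals all_analysis.

Set Implicit Arguments.
Unset Strict Implicit.
Unset Printing Implicit Defensive.

Import Order.TTheory GRing.Theory Num.Theory.
Import numFieldNormedType.Exports.
Local Open Scope classical_set_scope.
Local Open Scope ring_scope.

Section RegularTree.
Variable R : realType.
Variable A : finType.   (* the alphabet, |A| = p *)

(* The tree T: vertices are words (seq A), root = [::];               *)
Definition tadj (u w : seq A) : Prop :=
  (exists a, w = rcons u a) \/ (exists a, u = rcons w a).

Definition is_aut (g : seq A -> seq A) : Prop :=
  bijective g /\ g [::] = [::] /\ forall u w, tadj u w <-> tadj (g u) (g w).

(* Geometric realization.  The edge between u and u a is coded by the *)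
(* pair (u, a); its interior points are Ed u a t, 0 < t < 1, where t  *)
(* is the affine coordinate (t = 0 at u, t = 1 at u a).               *)
Definition open_unit := {t : R | 0 < t < 1}.

Inductive tpoint :=
| Vx of seq A
| Ed of seq A & A & open_unit.

Definition chi (u : seq A) (a : A) (t : R) : tpoint :=
  match @insub R (fun t => 0 < t < 1) open_unit t with
  | Some s => Ed u a s
  | None => if t <= 0 then Vx u else Vx (rcons u a)
  end.

(* CW (weak) topology: O is open iff its preimage under every
   characteristic map is open in [0,1]. *)
Definition topen (O : set tpoint) : Prop :=
  forall u a, exists V : set R, open V /\
    forall t : R, 0 <= t <= 1 -> (V t <-> O (chi u a t)).

Definition tcontinuous (g : R -> tpoint) : Prop :=
  forall O, topen O -> open (g @^-1` O).

Definition homeo_onto_image (g : R -> tpoint) : Prop :=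
  tcontinuous g /\
  forall V : set R, open V -> exists O, topen O /\ g @` V = range g `&` O.

Definition wire (g : R -> tpoint) : Prop :=
  injective g /\ homeo_onto_image g.

(* action of a vertex map on the realization: vertices go to vertices,
   each edge is mapped affinely onto the image edge. *)
Definition split_last (s : seq A) : option (seq A * A) :=
  match rev s with
  | [::] => None
  | a :: r => Some (rev r, a)
  end.

Definition realize (g : seq A -> seq A) (x : tpoint) : tpoint :=
  match x with
  | Vx v => Vx (g v)
  | Ed u a t =>
    let gu := g u in let gw := g (rcons u a) in
    match split_last gw with
    | Some (u', b) =>
        if u' == gu then Ed u' b t else
        match split_last gu with
        | Some (w', c) =>
            if w' == gw then chi w' c (1 - val t) else Vx gu
        | None => Vx gu
        end
    | None =>
        match split_last gu with
        | Some (w', c) =>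
            if w' == gw then chi w' c (1 - val t) else Vx gu
        | None => Vx gu
        end
    end
  end.

Fixpoint Ck (k : nat) (m n : nat) (V : set 'rV[R]_m) (f : 'rV[R]_m -> 'rV[R]_n)
  {struct k} : Prop :=
  match k with
  | 0 => forall x, V x -> {for x, continuous f}
  | k'.+1 => (forall x, V x -> differentiable f x) /\
             forall i : 'I_m, Ck k' V (fun x => 'D_(delta_mx 0 i) f x)
  end.

Definition smooth_on (m n : nat) (V : set 'rV[R]_m) (f : 'rV[R]_m -> 'rV[R]_n) :=
  forall k, Ck k V f.

(* Diffeologies.  A parametrization of X is (n, U, P) with U an open   *)
(* subset of R^n and P : U -> X (represented as a total function whose *)
(* values outside U are irrelevant).                                   *)
Definition plots_of (X : Type) :=
  forall n : nat, set 'rV[R]_n -> ('rV[R]_n -> X) -> Prop.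

Definition is_diffeology (X : Type) (D : plots_of X) : Prop :=
  (forall n U P, D n U P -> open U) /\
  (* plots are maps on U: only their values on U matter *)
  (forall n U (P Q : 'rV[R]_n -> X), D n U P ->
      (forall u, U u -> P u = Q u) -> D n U Q) /\
  (forall n (U : set 'rV[R]_n) (x : X), open U -> D n U (fun _ => x)) /\
  (forall n m (U : set 'rV[R]_n) (V : set 'rV[R]_m) P f,
      D n U P -> open V -> smooth_on V f -> (forall v, V v -> U (f v)) ->
      D m V (P \o f)) /\
  (forall n (U : set 'rV[R]_n) P, open U ->
      (forall u, U u -> exists W, open W /\ W u /\ W `<=` U /\ D n W P) ->
      D n U P).

Definition generated (X : Type) (G : (R -> X) -> Prop) : plots_of X :=
  fun n U P => open U /\
    forall D : plots_of X, is_diffeology D ->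
      (forall g, G g -> D 1%N setT (fun v => g (v ord0 ord0))) -> D n U P.

Definition DT : plots_of tpoint := generated wire.

(* Plots of Aut T for the functional diffeology (subset diffeology of
   C^oo(T,T)): P : U -> Aut T is a plot iff (u,x) |-> P(u)(x) is smooth
   U x T -> T, U x T carrying the product diffeology, whose plots are
   pairs (f, Q) with f : W -> U smooth and Q a plot of D_T. *)
Definition aut_functional_plot (k : nat) (U : set 'rV[R]_k)
  (P : 'rV[R]_k -> (seq A -> seq A)) : Prop :=
  open U /\
  forall m (W : set 'rV[R]_m) (f : 'rV[R]_m -> 'rV[R]_k) (Q : 'rV[R]_m -> tpoint),
    open W -> smooth_on W f -> (forall w, W w -> U (f w)) -> DT W Q ->
    DT W (fun w => realize (P (f w)) (Q w)).

Definition discrete_plot (X : Type) (k : nat) (U : set 'rV[R]_k)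
  (P : 'rV[R]_k -> X) : Prop :=
  open U /\
  forall u, U u -> exists W, open W /\ W u /\ W `<=` U /\
    forall w, W w -> P w = P u.

End RegularTree.

From HB Require Import structures.
From mathcomp Require Import all_boot all_order all_algebra.
From mathcomp Require Import all_classical all_reals all_analysis.

(* Vertices are isolated in T: the points that are not vertices other than v
   form an open set.  Since plots of D_T are continuous, evaluating a plot P of
   the functional diffeology at the constant plot v shows that each
   u |-> P(u)(v) is locally constant, hence constant on every ball in U; one
   ball works for all v at once, so P is locally constant.  Conversely, an
   automorphism maps embedded wires to embedded wires, hence D_T-plots to
   D_T-plots, and a locally constant P is a plot by the sheaf axiom. *)

Set Implicit Arguments.
Unset Strict Implicit.
Unset Printing Implicit Defensive.

Import Order.TTheory GRing.Theory Num.Theory.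
Import numFieldNormedType.Exports.
Local Open Scope classical_set_scope.
Local Open Scope ring_scope.

Lemma open_of_locally_open (T : topologicalType) (S : set T) :
  (forall x, S x -> exists N, open N /\ N x /\ N `<=` S) -> open S.
Proof.
move=> H; rewrite openE => x Sx; have [N [oN [Nx NS]]] := H x Sx.
by apply: (filterS NS); exact: open_nbhs_nbhs.
Qed.

Lemma open_setI_preimage (T T' : topologicalType) (V : set T) (f : T -> T')
    (S : set T') :
  open V -> (forall x, V x -> {for x, continuous f}) -> open S ->
  open (V `&` f @^-1` S).
Proof.
move=> oV cf oS; rewrite openE => x [Vx Sfx]; apply: filterI.
  exact: open_nbhs_nbhs.
by apply: (cf x Vx); exact: open_nbhs_nbhs.
Qed.

Section LocallyConstant.
Variables (R : realType) (V : normedModType R) (X : Type).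

Definition locally_constant_on (U : set V) (phi : V -> X) :=
  forall w, U w -> exists W, open W /\ W w /\ W `<=` U /\
    forall w', W w' -> phi w' = phi w.

Variables (U : set V) (phi : V -> X).
Hypothesis phi_lc : locally_constant_on U phi.

Lemma open_locally_constant_preimage (gam : R -> V) (Q : X -> Prop) :
  continuous gam -> open [set t | U (gam t) /\ Q (phi (gam t))].
Proof.
move=> cgam; apply: open_of_locally_open => t [Ut Qt].
have [W [oW [Wt [WU phiW]]]] := phi_lc Ut.
exists (setT `&` gam @^-1` W); split.
  exact: open_setI_preimage openT (fun x _ => cgam x) oW.
split; first by split.
by move=> s [_ Ws]; split; [exact: WU | rewrite phiW].
Qed.

Lemma locally_constant_segment (u0 w : V) :
  (forall t : R, 0 <= t <= 1 -> U (u0 + t *: (w - u0))) -> phi w = phi u0.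
Proof.
move=> segU; pose gam t := u0 + t *: (w - u0).
have cgam : continuous gam.
  by move=> t; apply: cvgD; [exact: cvg_cst | exact: scalel_continuous].
pose G := [set t | U (gam t) /\ phi (gam t) = phi u0].
have gam0 : gam 0 = u0 by rewrite /gam scale0r addr0.
have gam1 : gam 1 = w by rewrite /gam scale1r addrC subrK.
have G0 : (`[0, 1] `&` G) 0.
  split; first by rewrite /= in_itv /= lexx ler01.
  by rewrite /G /= gam0; split=> //; rewrite -gam0; apply: segU; rewrite lexx ler01.
have G_open : exists2 C : set R, open C & `[0, 1] `&` G = `[0, 1] `&` C.
  exists G => //.
  exact: (open_locally_constant_preimage (Q := eq^~ (phi u0)) cgam).
have G_closed : exists2 C : set R, closed C & `[0, 1] `&` G = `[0, 1] `&` C.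
  exists (~` [set t | U (gam t) /\ phi (gam t) <> phi u0]).
    apply: open_closedC.
    exact: (open_locally_constant_preimage (Q := fun x => x <> phi u0) cgam).
  apply/seteqP; split=> t [t01 Gt]; split=> //; first by case: Gt => _ ? [].
  have Ut : U (gam t) by apply: segU; move: t01; rewrite /= in_itv.
  by split=> //; apply: contra_notP Gt => ?; split.
have seg01 := @segment_connected R 0 1 (`[0, 1] `&` G) (ex_intro _ 0 G0)
  G_open G_closed.
have : (`[0, 1] `&` G) 1 by rewrite seg01 /= in_itv /= lexx ler01.
by case=> _ []; rewrite gam1.
Qed.

Lemma locally_constant_ball (u0 w : V) (r : R) :
  ball u0 r `<=` U -> ball u0 r w -> phi w = phi u0.
Proof.
move=> ballU uw; apply: locally_constant_segment => t /andP [t0 t1].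
apply: ballU; move: uw; rewrite -!ball_normE /=.
rewrite opprD addrA subrr add0r normrN normrZ ger0_norm // [`|w - u0|]distrC.
by apply: le_lt_trans; rewrite -[leRHS]mul1r ler_wpM2r.
Qed.

End LocallyConstant.

Section DiffeologyBasics.
Variable R : realType.

Lemma Ck_cst k m n (V : set 'rV[R]_m) (c : 'rV[R]_n) : Ck k V (fun _ => c).
Proof.
elim: k c => [|k IHk] c /=; first by move=> x _; exact: cst_continuous.
split; first by move=> x _; exact: differentiable_cst.
move=> i; suff -> : 'D_(delta_mx 0 i) (fun _ : 'rV[R]_m => c) = fun _ => 0.
  exact: IHk.
by apply/funext => x; rewrite derive_cst.
Qed.

Lemma smooth_on_id m (V : set 'rV[R]_m) : smooth_on V id.
Proof.
case=> [|k] /=; first by move=> x _; exact: cvg_id.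
split; first by move=> x _; exact: ex_diff.
move=> i; suff -> : 'D_(delta_mx 0 i) (@id 'rV[R]_m) = fun _ => delta_mx 0 i.
  exact: Ck_cst.
by apply/funext => x; rewrite derive_id.
Qed.

Lemma smooth_on_continuous m n (V : set 'rV[R]_m) (f : 'rV[R]_m -> 'rV[R]_n) :
  smooth_on V f -> forall x, V x -> {for x, continuous f}.
Proof. by move=> /(_ 0%N). Qed.

Lemma generated_diffeology (X : Type) (G : (R -> X) -> Prop) :
  is_diffeology (generated G).
Proof.
split; first by move=> n U P [].
split.
  move=> n U P Q [oU HP] PQ; split=> // D HD HG.
  by have [_ [Dloc _]] := HD; exact: Dloc (HP D HD HG) PQ.
split.
  move=> n U x oU; split=> // D HD _.
  by have [_ [_ [Dcst _]]] := HD; exact: Dcst.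
split.
  move=> n m U V P f [oU HP] oV sf fV; split=> // D HD HG.
  by have [_ [_ [_ [Dcomp _]]]] := HD; exact: Dcomp (HP D HD HG) oV sf fV.
move=> n U P oU HW; split=> // D HD HG.
have [_ [_ [_ [_ Dsheaf]]]] := HD; apply: Dsheaf => // u Uu.
have [W [oW [Wu [WU [_ HP]]]]] := HW u Uu.
by exists W; do !split=> //; exact: HP.
Qed.

Lemma generated_generator (X : Type) (G : (R -> X) -> Prop) g :
  G g -> generated G setT (fun v : 'rV[R]_1 => g (v ord0 ord0)).
Proof. by move=> Gg; split=> [|D _ HG]; [exact: openT | exact: HG]. Qed.

Definition pullback_plots (X Y : Type) (D : plots_of R Y) (h : X -> Y) :
  plots_of R X := fun n U Q => D n U (h \o Q).

Lemma pullback_diffeology (X Y : Type) (D : plots_of R Y) (h : X -> Y) :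
  is_diffeology D -> is_diffeology (pullback_plots D h).
Proof.
move=> [Dopen [Dloc [Dcst [Dcomp Dsheaf]]]].
split; first by move=> n U P /Dopen.
split; first by move=> n U P Q DP PQ; apply: Dloc DP _ => u Uu /=; rewrite PQ.
split; first by move=> n U x oU; exact: Dcst.
split; first by move=> n m U V P f DP oV sf fV; exact: Dcomp DP oV sf fV.
by move=> n U P oU HW; exact: Dsheaf.
Qed.

Definition continuous_plots (X : Type) (opens : set X -> Prop) : plots_of R X :=
  fun n U Q => open U /\ forall O, opens O -> open (U `&` Q @^-1` O).

Lemma continuous_plots_diffeology (X : Type) (opens : set X -> Prop) :
  is_diffeology (continuous_plots opens).
Proof.
split; first by move=> n U P [].
split.
  move=> n U P Q [oU HP] PQ; split=> // O oO.
  suff -> : U `&` Q @^-1` O = U `&` P @^-1` O by exact: HP.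
  by apply/seteqP; split=> x [Ux Ox]; split; rewrite //= ?PQ // -?PQ.
split.
  move=> n U x oU; split=> // O _; have [Ox|nOx] := pselect (O x).
    by rewrite preimage_cst ifT ?setIT //; exact/mem_set.
  by rewrite preimage_cst ifF ?setI0 ?open0 //; exact/memNset.
split.
  move=> n m U V P f [oU HP] oV sf fV; split=> // O oO.
  suff -> : V `&` (P \o f) @^-1` O = V `&` f @^-1` (U `&` P @^-1` O).
    exact: open_setI_preimage oV (smooth_on_continuous sf) (HP O oO).
  by apply/seteqP; split=> x [Vx Ox]; do ?split=> //; [exact: fV | case: Ox].
move=> n U P oU HW; split=> // O oO; apply: open_of_locally_open => x [Ux Ox].
have [W [oW [Wx [WU [_ HP]]]]] := HW x Ux.
exists (W `&` P @^-1` O); split; first exact: HP.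
by split=> [|y [Wy Oy]]; split=> //; exact: WU.
Qed.

End DiffeologyBasics.

Lemma open_prop_or (R : realType) (P : Prop) (S : set R) :
  open S -> open [set t | P \/ S t].
Proof.
move=> oS; have [p|np] := pselect P.
  suff -> : [set t | P \/ S t] = setT by exact: openT.
  by apply/seteqP; split=> // t; left.
suff -> : [set t | P \/ S t] = S by [].
by apply/seteqP; split=> t /=; [case | right].
Qed.

Section TreeAutomorphisms.
Variables (R : realType) (A : finType).
Implicit Types (g h : seq A -> seq A) (u v : seq A) (a b : A).

Lemma split_last_rcons u a : split_last (rcons u a) = Some (u, a).
Proof. by rewrite /split_last rev_rcons revK. Qed.

Lemma aut_size_children g : is_aut g -> forall u,
  size (g u) = size u /\ forall a, exists b, g (rcons u a) = rcons (g u) b.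
Proof.
move=> [[g' gK _] [g0 gadj]]; elim/last_ind => [|u c [sgu children]].
  rewrite g0; split=> // a.
  have /gadj [[b gb]|[b]] : tadj [::] (rcons [::] a) by left; exists a.
    by exists b; rewrite gb g0.
  by rewrite g0; case: (g _).
have [c' gc] := children c.
have sgc : size (g (rcons u c)) = (size u).+1 by rewrite gc size_rcons sgu.
rewrite size_rcons; split=> // a.
have /gadj [[b gb]|[b]] : tadj (rcons u c) (rcons (rcons u c) a).
- by left; exists a.
- by exists b.
rewrite gc => /rcons_inj [] /(can_inj gK) /(congr1 size) /eqP.
by rewrite !size_rcons ltn_eqF.
Qed.

Lemma aut_child g : is_aut g -> forall u a,
  exists b, g (rcons u a) = rcons (g u) b.
Proof. by move=> autg u; have [_] := aut_size_children autg u. Qed.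

Lemma aut_inverse g h : is_aut g -> cancel g h -> cancel h g -> is_aut h.
Proof.
move=> [_ [g0 gadj]] gK hK; split; first by exists g.
split; first by rewrite -{1}g0 gK.
by move=> u w; rewrite (gadj (h u)) !hK.
Qed.

Lemma realize_Ed g u a b (t : open_unit R) :
  g (rcons u a) = rcons (g u) b -> realize g (Ed u a t) = Ed (g u) b t.
Proof. by move=> gb; rewrite /realize gb split_last_rcons eqxx. Qed.

Lemma realize_chi g u a b (t : R) :
  g (rcons u a) = rcons (g u) b -> realize g (chi u a t) = chi (g u) b t.
Proof.
move=> gb; rewrite /chi; case: insubP => [s _ _|_]; first exact: realize_Ed.
by case: ifP; rewrite //= gb.
Qed.

Lemma realizeK g h : is_aut g -> cancel g h -> cancel h g ->
  cancel (@realize R A g) (realize h).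
Proof.
move=> autg gK hK [v|u a t]; first by rewrite /= gK.
have [b gb] := aut_child autg u a.
by rewrite (realize_Ed t gb) (@realize_Ed h _ b a) gK // -gb !gK.
Qed.

Lemma topen_realize_preimage g (O : set (tpoint R A)) :
  is_aut g -> topen O -> topen (realize g @^-1` O).
Proof.
move=> autg oO u a; have [b gb] := aut_child autg u a.
have [V [oV VO]] := oO (g u) b; exists V; split=> // t t01.
by rewrite /preimage /= (realize_chi t gb); exact: VO.
Qed.

Lemma wire_realize g (gam : R -> tpoint R A) :
  is_aut g -> wire gam -> wire (realize g \o gam).
Proof.
move=> autg [gam_inj [gam_cont gam_homeo]].
have [h gK hK] := autg.1.
have realize_gK := realizeK autg gK hK.
split; first by move=> x y /= /(can_inj realize_gK) /gam_inj.
split; first by move=> B oB; exact: gam_cont (topen_realize_preimage autg oB).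
move=> V oV; have [B [oB gamV]] := gam_homeo V oV.
exists (realize h @^-1` B); split.
  exact: topen_realize_preimage (aut_inverse autg gK hK) oB.
apply/seteqP; split=> x.
  case=> v Vv <-; split; first by exists v.
  have : (gam @` V) (gam v) by exists v.
  by rewrite gamV /preimage /= realize_gK => -[].
case=> -[s _ <-]; rewrite /preimage /= realize_gK => Bs.
have : (range gam `&` B) (gam s) by split=> //; exists s.
by rewrite -gamV => -[v Vv <-]; exists v.
Qed.

Lemma DT_diffeology : is_diffeology (@DT R A).
Proof. exact: generated_diffeology. Qed.

Lemma DT_realize g n (U : set 'rV[R]_n) Q :
  is_aut g -> DT U Q -> DT U (realize g \o Q).
Proof.
move=> autg [_ DTQ].
have := DTQ (pullback_plots (@DT R A) (realize g)); apply.
  exact: pullback_diffeology DT_diffeology.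
by move=> gam wire_gam; exact: generated_generator (wire_realize autg wire_gam).
Qed.

Lemma DT_continuous n (U : set 'rV[R]_n) Q :
  DT U Q -> continuous_plots (@topen R A) U Q.
Proof.
move=> [_ DTQ]; apply: DTQ (continuous_plots_diffeology _ _) _.
move=> gam [_ [gam_cont _]]; split=> [|B oB]; first exact: openT.
rewrite setTI.
apply: (@open_comp _ _ (fun v : 'rV[R]_1 => v ord0 ord0) (gam @^-1` B)).
  by move=> v _; apply: differentiable_continuous; exact: differentiable_coord.
exact: gam_cont.
Qed.

Definition avoid_other_vertices v : set (tpoint R A) :=
  [set x | forall w, x = Vx R w -> w = v].

Lemma topen_avoid_other_vertices v : topen (avoid_other_vertices v).
Proof.
move=> u a.
exists ([set t | u = v \/ 0 < t] `&` [set t | rcons u a = v \/ t < 1]); split.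
  by apply: openI; apply: open_prop_or; [exact: open_gt | exact: open_lt].
move=> t /andP [t0 t1]; rewrite /chi.
case: insubP => [s /andP [tpos tlt1] _|nt01].
  by split=> // _; split; right.
case: ifP => [tle0|/negbT tgt0].
  have -> : t = 0 by apply/eqP; rewrite eq_le tle0 t0.
  split=> [[[-> _ w [->] //|]]|avoid]; first by rewrite ltxx.
  by split; [left; exact: avoid | right; exact: ltr01].
have -> : t = 1.
  move: nt01; rewrite -ltNge in tgt0; rewrite tgt0 /= -leNgt => t_ge1.
  by apply/eqP; rewrite eq_le t1.
split=> [[_ [-> w [->] //|]]|avoid]; first by rewrite ltxx.
by split; [right; exact: ltr01 | left; exact: avoid].
Qed.

End TreeAutomorphisms.

Section FunctionalPlots.
Variables (R : realType) (A : finType) (k : nat).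
Variables (U : set 'rV[R]_k) (P : 'rV[R]_k -> seq A -> seq A).

Lemma aut_functional_plot_vertex_locally_constant v :
  aut_functional_plot U P -> locally_constant_on U (fun w => P w v).
Proof.
move=> [oU HF] w Uw.
have DTv : DT U (fun u => realize (P u) (Vx R v)).
  have [_ [_ [DTcst _]]] := @DT_diffeology R A.
  exact: HF (smooth_on_id U) (fun _ Uu => Uu) (DTcst _ _ _ oU).
have [_ DTv_cont] := DT_continuous DTv.
exists (U `&` (fun u => Vx R (P u v)) @^-1` avoid_other_vertices (P w v)).
split; first exact: DTv_cont (topen_avoid_other_vertices _ _).
split; first by split=> // w' [].
by split=> [w' []//|w' [_]]; exact.
Qed.

Lemma aut_functional_plot_locally_constant :
  aut_functional_plot U P -> locally_constant_on U P.
Proof.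
move=> HF u0 Uu0; have [oU _] := HF.
have /nbhs_ballP [r /= rpos ballU] : nbhs u0 U by exact: open_nbhs_nbhs.
exists (ball u0 r); split; first exact: ball_open.
split; first exact: ballxx.
split=> // w uw; apply/funext => v.
have lcv := aut_functional_plot_vertex_locally_constant v HF.
exact: (locally_constant_ball lcv ballU uw).
Qed.

Lemma discrete_plot_aut_functional :
  (forall u, U u -> is_aut (P u)) ->
  discrete_plot U P -> aut_functional_plot U P.
Proof.
move=> autP [oU lcP]; split=> // m W f Q oW sf fW DTQ.
have [_ [DTloc [_ [DTcomp DTsheaf]]]] := @DT_diffeology R A.
apply: DTsheaf => // w0 Ww0.
have [N [oN [Nf [NU PN]]]] := lcP _ (fW _ Ww0).
have oWN : open (W `&` f @^-1` N).
  exact: open_setI_preimage oW (smooth_on_continuous sf) oN.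
exists (W `&` f @^-1` N); split=> //.
split; first by split.
split; first by move=> ? [].
apply: (DTloc _ _ (realize (P (f w0)) \o Q)).
  apply: (DT_realize (autP _ (fW _ Ww0))).
  have WN_W v : (W `&` f @^-1` N) v -> W (id v) by case.
  exact: (DTcomp _ _ W _ Q id DTQ oWN (smooth_on_id _) WN_W).
by move=> w [_ Nw] /=; rewrite PN.
Qed.

End FunctionalPlots.

Theorem mainTheorem7 (R : realType) (A : finType) (hp : (1 < #|A|)%N)
  (k : nat) (U : set 'rV[R]_k) (P : 'rV[R]_k -> (seq A -> seq A))
  (hP : forall u, U u -> is_aut (P u)) :
  aut_functional_plot U P <-> discrete_plot U P.
Proof.
split; last exact: discrete_plot_aut_functional.
move=> HF; split; first exact: HF.1.
exact: aut_functional_plot_locally_constant.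
Qed.
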